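(* Let $\mathcal N=\{(M_2,N_1,N_3)\in\mathbb{C}^3\}$ carry the system \[ \dot M_2=N_3,\qquad \dot N_1=-M_2N_3,\qquad \dot N_3=M_2N_1 \] restricted to $N_1^2+N_3^2=1$. For $k\in(0,1]$ let $\Gamma_k$ be the complex phase curve given by $\frac12M_2^2+N_1=2k^2-1$, $N_1^2+N_3^2=1$ (for $k=1$ with the equilibrium $u=(M_2,N_1,N_3)=(0,1,0)$ removed). Let $\Omega$ be the closure of the set of real points of $\Gamma_1$ (i.e. of the union of the two real orbits homoclinic to the hyperbolic equilibrium $u$). Then for every complex neighbourhood $U\subset\mathcal N$ of $\Omega$ there exists $\epsilon>0$ such that for $0<1-k<\epsilon$ the fundamental group $\pi_1(\Gamma_k)$ is generated by loops lying in $U$.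
   Context: Here $\mathcal N$ is identified with the invariant submanifold $\{(\mathbf M,\mathbf N)\in\mathbb{C}^6: M_1=M_3=N_2=0,\ N_1^2+N_3^2=1\}$ of the complexified Euler–Poisson equations $\dot{\mathbf M}=[\mathbf M,\mathbf J\mathbf M]+[\mathbf N,\mathbf L]$, $\dot{\mathbf N}=[\mathbf N,\mathbf J\mathbf M]$ written in a body frame with $\mathbf L=[1,0,0]^T$ and second diagonal entry of $\mathbf J$ equal to $1$; the system above is the restriction to $\mathcal N$, with Hamiltonian $\frac12M_2^2+N_1$. For $k\in(0,1)$, $\Gamma_k$ is a smooth affine elliptic curve (a torus with two points removed). *)

From Stdlib Require Import Reals List.
From Coquelicot Require Import Coquelicot.
Open Scope R_scope.

Definition pt := (C * C * C)%type.
Definition M2 (p : pt) : C := fst (fst p).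
Definition N1 (p : pt) : C := snd (fst p).
Definition N3 (p : pt) : C := snd p.

Definition OnN (p : pt) : Prop :=
  Cplus (Cmult (N1 p) (N1 p)) (Cmult (N3 p) (N3 p)) = RtoC 1.

Definition u_eq : pt := (RtoC 0, RtoC 1, RtoC 0).

Definition Gamma (k : R) (p : pt) : Prop :=
  Cplus (Cmult (RtoC (1/2)) (Cmult (M2 p) (M2 p))) (N1 p) = RtoC (2 * k ^ 2 - 1)
  /\ OnN p /\ (k = 1 -> p <> u_eq).

Definition is_real_pt (p : pt) : Prop :=
  Im (M2 p) = 0 /\ Im (N1 p) = 0 /\ Im (N3 p) = 0.

Definition dist3 (p q : pt) : R :=
  sqrt (Cmod (Cminus (M2 p) (M2 q)) ^ 2 + Cmod (Cminus (N1 p) (N1 q)) ^ 2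
        + Cmod (Cminus (N3 p) (N3 q)) ^ 2).

Definition Omega (p : pt) : Prop :=
  forall r, 0 < r -> exists q, Gamma 1 q /\ is_real_pt q /\ dist3 p q < r.

Definition nbhd_of_Omega_in_N (U : pt -> Prop) : Prop :=
  (forall p, U p -> OnN p) /\
  (forall p, Omega p -> exists r, 0 < r /\
      forall q, OnN q -> dist3 p q < r -> U q).

(* A path in S parametrized by [0,1]: a continuous map R -> C^3 whose
   restriction to [0,1] takes values in S (every continuous map on [0,1]
   extends continuously to R by constants). *)
Definition path_in (S : pt -> Prop) (g : R -> pt) : Prop :=
  (forall t, continuous g t) /\ (forall t, 0 <= t <= 1 -> S (g t)).

Definition loop_in (S : pt -> Prop) (p : pt) (g : R -> pt) : Prop :=
  path_in S g /\ g 0 = p /\ g 1 = p.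

Definition loop_homotopic (S : pt -> Prop) (p : pt) (g h : R -> pt) : Prop :=
  exists H : R * R -> pt,
    (forall z, continuous H z) /\
    (forall s t, 0 <= s <= 1 -> 0 <= t <= 1 -> S (H (s, t))) /\
    (forall t, 0 <= t <= 1 -> H (0, t) = g t /\ H (1, t) = h t) /\
    (forall s, 0 <= s <= 1 -> H (s, 0) = p /\ H (s, 1) = p).

Definition loop_concat (g h : R -> pt) : R -> pt :=
  fun t => if Rle_dec t (1/2) then g (2 * t) else h (2 * t - 1).
Definition loop_rev (g : R -> pt) : R -> pt := fun t => g (1 - t).
Definition const_loop (p : pt) : R -> pt := fun _ => p.

Definition word_loop (p : pt) (w : list (bool * (R -> pt))) : R -> pt :=
  fold_right (fun (bg : bool * (R -> pt)) (acc : R -> pt) => loop_concat (if fst bg then snd bg else loop_rev (snd bg)) acc)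
             (const_loop p) w.

Definition pi1_generated_by_loops_in (S U : pt -> Prop) (p : pt) : Prop :=
  forall g, loop_in S p g ->
    exists w : list (bool * (R -> pt)),
      (forall bg, In bg w -> loop_in (fun x => S x /\ U x) p (snd bg)) /\
      loop_homotopic S p g (word_loop p w).

From Stdlib Require Import Reals List Lra Psatz Classical IndefiniteDescription.
From Coquelicot Require Import Coquelicot.
Open Scope R_scope.

(* In the coordinates z = N1 + i N3 and w = N1 - i N3 = 1/z, the curve Gamma_k (k < 1)
   is the double cover M2^2 = -(z - a)(z - b) w of C^* branched at the two points
   a, b = conj a of the unit circle with a + b = 2 (2k^2 - 1).  Pushing z radially into
   the annulus 1 - d <= |z| <= 1 + d and lifting this motion to the cover, by multiplying
   M2 with square roots of (rho z - a)/(z - a) and (rho z - b)/(z - b), deforms Gamma_k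
   into its part over the annulus while fixing a base point on the unit circle; the
   square roots have continuous branches because z and rho z lie on the same side of
   the unit circle, which keeps the real parts of the radicands positive.  So every loop
   is homotopic to a loop over the annulus.  As k -> 1 the branch points tend to 1 and
   the part of Gamma_k over a thin annulus approaches the real figure eight
   Omega = {M2^2 = 2 - 2 N1, |z| = 1}; by compactness of Omega it then lies in any
   prescribed neighbourhood of Omega. *)

Section RealContinuity.
Context {X : UniformSpace}.
Implicit Types (f g : X -> R) (x : X).

Lemma continuous_Rplus f g x :
  continuous f x -> continuous g x -> continuous (fun y => f y + g y) x.
Proof. exact (@continuous_plus X R_AbsRing R_NormedModule f g x). Qed.

Lemma continuous_Ropp f x : continuous f x -> continuous (fun y => - f y) x.
Proof. exact (@continuous_opp X R_AbsRing R_NormedModule f x). Qed.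

Lemma continuous_Rminus f g x :
  continuous f x -> continuous g x -> continuous (fun y => f y - g y) x.
Proof. intros Hf Hg. apply continuous_Rplus; [exact Hf | now apply continuous_Ropp]. Qed.

Lemma continuous_Rmult f g x :
  continuous f x -> continuous g x -> continuous (fun y => f y * g y) x.
Proof. exact (@continuous_mult X R_AbsRing f g x). Qed.

Lemma continuous_Rpow f n x : continuous f x -> continuous (fun y => f y ^ n) x.
Proof.
  intros Hf. induction n as [|n IH]; simpl.
  - apply continuous_const.
  - now apply continuous_Rmult.
Qed.

Lemma continuous_Rinv_fun f x :
  continuous f x -> f x <> 0 -> continuous (fun y => / f y) x.
Proof. intros Hf Hx. apply (continuous_comp f Rinv); [exact Hf | now apply continuous_Rinv]. Qed.

Lemma continuous_Rdiv f g x :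
  continuous f x -> continuous g x -> g x <> 0 -> continuous (fun y => f y / g y) x.
Proof. intros Hf Hg Hx. apply continuous_Rmult; [exact Hf | now apply continuous_Rinv_fun]. Qed.

Lemma continuous_sqrt_fun f x : continuous f x -> continuous (fun y => sqrt (f y)) x.
Proof. intros Hf. apply (continuous_comp f sqrt); [exact Hf | apply continuous_sqrt]. Qed.

Lemma locally_between f x a b :
  continuous f x -> a < f x < b -> locally x (fun y => a < f y < b).
Proof.
  intros Hf Hab. apply (Hf (fun r => a < r < b)).
  apply (locally_interval _ (f x) a b); simpl; tauto.
Qed.

End RealContinuity.

Definition clip (lo hi x : R) : R := Rmax lo (Rmin hi x).

Lemma clip_bounds lo hi x : lo <= hi -> lo <= clip lo hi x <= hi.
Proof. unfold clip, Rmax, Rmin; repeat destruct Rle_dec; lra. Qed.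

Lemma clip_id lo hi x : lo <= x <= hi -> clip lo hi x = x.
Proof. unfold clip, Rmax, Rmin; repeat destruct Rle_dec; lra. Qed.

Lemma clip_lipschitz lo hi x y : Rabs (clip lo hi x - clip lo hi y) <= Rabs (x - y).
Proof. unfold clip, Rmax, Rmin, Rabs; repeat destruct Rle_dec; repeat destruct Rcase_abs; lra. Qed.

Lemma continuous_clip lo hi x : continuous (clip lo hi) x.
Proof.
  apply filterlim_locally. intros eps. exists eps. intros y Hy.
  exact (Rle_lt_trans _ _ _ (clip_lipschitz lo hi y x) Hy).
Qed.

Section ComplexContinuity.
Context {X : UniformSpace}.

Lemma continuous_pair_iff {V W : UniformSpace} (f : X -> V * W) x :
  continuous f x <->
  continuous (fun y => fst (f y)) x /\ continuous (fun y => snd (f y)) x.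
Proof.
  split.
  - intros Hf. split; apply (continuous_comp f); auto; destruct (f x);
      [apply continuous_fst | apply continuous_snd].
  - intros [H1 H2].
    apply (continuous_ext (fun y => (fst (f y), snd (f y)))); [intros y; now destruct (f y)|].
    apply (continuous_comp_2 _ _ (fun a b => (a, b))); auto.
    apply (continuous_ext (fun z => z)); [now intros [] | apply continuous_id].
Qed.

Lemma continuous_C_iff (f : X -> C) x :
  continuous f x <->
  continuous (fun y => fst (f y)) x /\ continuous (fun y => snd (f y)) x.
Proof. exact (@continuous_pair_iff R_UniformSpace R_UniformSpace f x). Qed.

Lemma continuous_pt_iff (p : X -> pt) x :
  continuous p x <-> continuous (fun y => M2 (p y)) x /\
    continuous (fun y => N1 (p y)) x /\ continuous (fun y => N3 (p y)) x.
Proof.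
  rewrite (@continuous_pair_iff (prod_UniformSpace C_UniformSpace C_UniformSpace) C_UniformSpace).
  rewrite (@continuous_pair_iff C_UniformSpace C_UniformSpace (fun y => fst (p y))).
  unfold M2, N1, N3; tauto.
Qed.

Implicit Types (f g : X -> C) (x : X).

Lemma continuous_RtoC (f : X -> R) x : continuous f x -> continuous (fun y => RtoC (f y)) x.
Proof. intros Hf. apply continuous_C_iff; split; [exact Hf | apply continuous_const]. Qed.

Lemma continuous_Cplus f g x :
  continuous f x -> continuous g x -> continuous (fun y => f y + g y)%C x.
Proof.
  rewrite !continuous_C_iff; intros [] []; split; simpl; now apply continuous_Rplus.
Qed.

Lemma continuous_Cminus f g x :
  continuous f x -> continuous g x -> continuous (fun y => f y - g y)%C x.
Proof.
  rewrite !continuous_C_iff; intros [] []; split; simpl; now apply continuous_Rminus.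
Qed.

Lemma continuous_Cmult f g x :
  continuous f x -> continuous g x -> continuous (fun y => f y * g y)%C x.
Proof.
  rewrite !continuous_C_iff; intros [] []; split; simpl;
    [apply continuous_Rminus | apply continuous_Rplus]; now apply continuous_Rmult.
Qed.

Lemma continuous_Cmod f x : continuous f x -> continuous (fun y => Cmod (f y)) x.
Proof.
  rewrite continuous_C_iff; intros []. unfold Cmod.
  apply continuous_sqrt_fun, continuous_Rplus; now apply continuous_Rpow.
Qed.

Lemma continuous_Cinv f x : continuous f x -> f x <> 0%C -> continuous (fun y => / f y)%C x.
Proof.
  intros Hf Hx.
  assert (Hm : 0 < fst (f x) ^ 2 + snd (f x) ^ 2).
  { destruct (f x) as [a b]; simpl.
    destruct (Req_dec a 0), (Req_dec b 0); [subst; now contradict Hx | nra ..]. }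
  apply continuous_C_iff in Hf as [H1 H2].
  apply continuous_C_iff; unfold Cinv; cbn [fst snd]; split; apply continuous_Rdiv; try lra;
    try apply continuous_Ropp; auto; apply continuous_Rplus; now apply continuous_Rpow.
Qed.

End ComplexContinuity.

Definition csqrt (w : C) : C :=
  (sqrt ((Cmod w + Re w) / 2), Im w / (2 * sqrt ((Cmod w + Re w) / 2))).

Lemma Cmod_sqr (w : C) : Cmod w * Cmod w = Re w * Re w + Im w * Im w.
Proof. unfold Cmod, Re, Im. rewrite sqrt_sqrt; nra. Qed.

Lemma csqrt_sqr (w : C) : 0 < Cmod w + Re w -> (csqrt w * csqrt w)%C = w.
Proof.
  intros H. pose proof (Cmod_sqr w) as Hm. unfold csqrt.
  set (m := Cmod w) in *. destruct w as [x y]; simpl in *.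
  assert (Hs : sqrt ((m + x) / 2) * sqrt ((m + x) / 2) = (m + x) / 2)
    by (apply sqrt_sqrt; lra).
  assert (Hp : 0 < sqrt ((m + x) / 2)) by (apply sqrt_lt_R0; lra).
  set (s := sqrt ((m + x) / 2)) in *.
  apply injective_projections; simpl.
  - replace (s * s - y / (2 * s) * (y / (2 * s))) with (s * s - y * y / (4 * (s * s)))
      by (field; lra).
    rewrite Hs. replace (y * y) with ((m + x) * (m - x)) by nra. field. lra.
  - field. lra.
Qed.

Lemma csqrt_1 : csqrt 1 = 1%C.
Proof.
  unfold csqrt. rewrite Cmod_1. simpl. replace ((1 + 1) / 2) with 1 by field.
  rewrite sqrt_1. apply injective_projections; simpl; field.
Qed.

Lemma continuous_csqrt {X : UniformSpace} (f : X -> C) x :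
  continuous f x -> 0 < Cmod (f x) + Re (f x) -> continuous (fun y => csqrt (f y)) x.
Proof.
  intros Hf Hp. pose proof (continuous_Cmod f x Hf) as Hm.
  apply continuous_C_iff in Hf as [H1 H2].
  assert (Hs : continuous (fun y => sqrt ((Cmod (f y) + Re (f y)) / 2)) x).
  { apply continuous_sqrt_fun, continuous_Rdiv;
      [now apply continuous_Rplus | apply continuous_const | lra]. }
  assert (0 < sqrt ((Cmod (f x) + Re (f x)) / 2)) by (apply sqrt_lt_R0; lra).
  apply continuous_C_iff; split; simpl; [exact Hs|].
  apply continuous_Rdiv; auto; [apply continuous_Rmult; auto; apply continuous_const | lra].
Qed.

Definition zcoord (q : pt) : C := (N1 q + Ci * N3 q)%C.
Definition wcoord (q : pt) : C := (N1 q - Ci * N3 q)%C.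
Definition pt_of (M z w : C) : pt :=
  (M, (RtoC (1/2) * (z + w))%C, (RtoC (1/2) * - Ci * (z - w))%C).

Lemma Ci_sqr : (Ci * Ci)%C = RtoC (-1).
Proof. apply injective_projections; simpl; ring. Qed.

Lemma pt_of_coords q : pt_of (M2 q) (zcoord q) (wcoord q) = q.
Proof.
  destruct q as [[M [a b]] [c e]].
  unfold pt_of, zcoord, wcoord, M2, N1, N3; simpl.
  repeat f_equal; apply injective_projections; simpl; field.
Qed.

Lemma zcoord_pt_of M z w : zcoord (pt_of M z w) = z.
Proof.
  unfold zcoord, pt_of, N1, N3; simpl.
  destruct z, w; apply injective_projections; simpl; field.
Qed.

Lemma wcoord_pt_of M z w : wcoord (pt_of M z w) = w.
Proof.
  unfold wcoord, pt_of, N1, N3; simpl.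
  destruct z, w; apply injective_projections; simpl; field.
Qed.

Lemma OnN_pt_of M z w : OnN (pt_of M z w) <-> (z * w)%C = 1%C.
Proof.
  unfold OnN, pt_of, N1, N3; simpl.
  replace (RtoC (1/2) * (z + w) * (RtoC (1/2) * (z + w)) +
           RtoC (1/2) * - Ci * (z - w) * (RtoC (1/2) * - Ci * (z - w)))%C
    with (z * w)%C; [tauto|].
  transitivity (RtoC (1/2) * RtoC (1/2) * ((z + w) * (z + w) + (Ci * Ci) * ((z - w) * (z - w))))%C;
    [rewrite Ci_sqr; destruct z, w; apply injective_projections; simpl; field | ring].
Qed.

Lemma zw_one q : OnN q -> (zcoord q * wcoord q)%C = 1%C.
Proof. rewrite <- (pt_of_coords q) at 1. apply OnN_pt_of. Qed.

Lemma Cmod_zcoord_pos q : OnN q -> 0 < Cmod (zcoord q).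
Proof.
  intros H. apply Cmod_gt_0. intros E. pose proof (zw_one q H) as E1.
  rewrite E, Cmult_0_l in E1. injection E1. lra.
Qed.

Definition branch (k : R) : C := (2 * k ^ 2 - 1, sqrt (1 - (2 * k ^ 2 - 1) ^ 2)).

Lemma branch_conj k : k * k <= 1 ->
  (branch k * Cconj (branch k))%C = 1%C /\
  (branch k + Cconj (branch k))%C = RtoC (2 * (2 * k ^ 2 - 1)).
Proof.
  intros Hk.
  assert (Hs : sqrt (1 - (2 * k ^ 2 - 1) ^ 2) * sqrt (1 - (2 * k ^ 2 - 1) ^ 2)
               = 1 - (2 * k ^ 2 - 1) ^ 2) by (apply sqrt_sqrt; nra).
  unfold branch, Cconj; split; apply injective_projections; simpl in *; nra.
Qed.

Lemma Cmod_branch k : k * k <= 1 -> Cmod (branch k) = 1.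
Proof.
  intros Hk. destruct (branch_conj k Hk) as [H _].
  rewrite <- Cmod2_conj in H. injection H as H.
  pose proof (Cmod_ge_0 (branch k)). nra.
Qed.

Lemma Gamma_iff_branch_eq k q : -1 <= k < 1 ->
  Gamma k q <-> OnN q /\
    (M2 q * M2 q)%C =
    (- ((zcoord q - branch k) * (zcoord q - Cconj (branch k))) * wcoord q)%C.
Proof.
  intros Hk. unfold Gamma. destruct (branch_conj k ltac:(nra)) as [Hab Hsum].
  set (a := branch k) in *. set (b := Cconj a) in *.
  set (c := 2 * k ^ 2 - 1) in *.
  assert (Key : OnN q ->
    (RtoC (1/2) * (M2 q * M2 q) + N1 q - RtoC c)%C =
    (RtoC (1/2) * (M2 q * M2 q + (zcoord q - a) * (zcoord q - b) * wcoord q))%C).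
  { intros HN. pose proof (zw_one q HN) as Hzw.
    replace ((zcoord q - a) * (zcoord q - b) * wcoord q)%C
      with (zcoord q * (zcoord q * wcoord q) - (a + b) * (zcoord q * wcoord q)
            + (a * b) * wcoord q)%C by ring.
    rewrite Hzw, Hab, Hsum. unfold zcoord, wcoord.
    destruct (M2 q), (N1 q), (N3 q); apply injective_projections; simpl; field. }
  assert (Half : forall Y Z : C, (RtoC (1/2) * Y)%C = (RtoC (1/2) * Z)%C -> Y = Z).
  { intros [] [] E; injection E; intros; apply injective_projections; simpl; lra. }
  split.
  - intros [HG [HN _]]. split; [exact HN|].
    assert (E : (M2 q * M2 q + (zcoord q - a) * (zcoord q - b) * wcoord q)%C = 0%C).
    { apply Half. rewrite <- (Key HN), HG. ring. }
    transitivity ((M2 q * M2 q + (zcoord q - a) * (zcoord q - b) * wcoord q)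
                  - (zcoord q - a) * (zcoord q - b) * wcoord q)%C; [ring | rewrite E; ring].
  - intros [HN HM]. split; [|split; [exact HN | lra]].
    assert (E : (RtoC (1/2) * (M2 q * M2 q) + N1 q - RtoC c)%C = 0%C)
      by (rewrite (Key HN), HM; ring).
    transitivity ((RtoC (1/2) * (M2 q * M2 q) + N1 q - RtoC c) + RtoC c)%C;
      [ring | rewrite E; ring].
Qed.

(* (r z - a) / (z - a) for z <> a (ratio_mul), written so that it is 1 at r = 1 even
   when z = a. *)
Definition ratio (a : C) (r : R) (z : C) : C := (1 + RtoC (r - 1) * z / (z - a))%C.

Lemma ratio_1 a z : ratio a 1 z = 1%C.
Proof. unfold ratio, Cdiv. rewrite Rminus_diag. ring. Qed.

Lemma ratio_mul a r z : z <> a -> (ratio a r z * (z - a))%C = (RtoC r * z - a)%C.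
Proof.
  intros Hz. unfold ratio, Cdiv.
  transitivity ((z - a) + RtoC (r - 1) * z * (/ (z - a) * (z - a)))%C; [ring|].
  rewrite Cinv_l by (intros E; apply Hz, Ceq_minus, E).
  rewrite RtoC_minus. ring.
Qed.

Lemma Re_ratio_pos a r z : Cmod a = 1 -> 0 < r -> 0 < (r * Cmod z - 1) * (Cmod z - 1) ->
  0 < Re (ratio a r z).
Proof.
  intros Ha Hr Hside.
  pose proof (Cmod_sqr a) as Ha2. pose proof (Cmod_sqr z) as Hz2. pose proof (Cmod_ge_0 z).
  rewrite Ha in Ha2. set (n := Cmod z) in *.
  destruct a as [c t], z as [x y]; unfold Re, Im in *; simpl in Ha2, Hz2.
  assert (HD : 0 < (x - c) ^ 2 + (y - t) ^ 2).
  { destruct (Req_dec x c), (Req_dec y t); [subst; exfalso | nra ..].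
    assert (Hn : n = 1) by nra. rewrite Hn in Hside. nra. }
  assert (Hre : fst (ratio (c, t) r (x, y))
                = ((x - c) ^ 2 + (y - t) ^ 2 + (r - 1) * (x * (x - c) + y * (y - t)))
                  / ((x - c) ^ 2 + (y - t) ^ 2)).
  { unfold ratio, Cdiv, Cinv; simpl. field. lra. }
  rewrite Hre. apply Rdiv_lt_0_compat; [|exact HD].
  (* The numerator is r |z|^2 - (r + 1) Re (z conj a) + 1 >= (r |z| - 1) (|z| - 1), since
     Re (z conj a) <= |z|. *)
  assert (HCS : x * c + y * t <= n).
  { pose proof (pow2_ge_0 (x * t - y * c)).
    assert ((x * c + y * t) ^ 2 <= n * n) by (rewrite Hz2; nra). nra. }
  assert (0 <= (r + 1) * (n - (x * c + y * t))) by (apply Rmult_le_pos; lra).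
  nra.
Qed.

Definition stretch (d s : R) (q : pt) : R :=
  ((1 - s) * Cmod (zcoord q) + s * clip (1 - d) (1 + d) (Cmod (zcoord q))) / Cmod (zcoord q).

Definition deform (k d s : R) (q : pt) : pt :=
  pt_of (M2 q * csqrt (ratio (branch k) (stretch d s q) (zcoord q))
              * csqrt (ratio (Cconj (branch k)) (stretch d s q) (zcoord q))
              * RtoC (/ sqrt (stretch d s q)))
        (RtoC (stretch d s q) * zcoord q) (RtoC (/ stretch d s q) * wcoord q).

Lemma stretch_mul d s q : 0 < Cmod (zcoord q) ->
  stretch d s q * Cmod (zcoord q)
  = (1 - s) * Cmod (zcoord q) + s * clip (1 - d) (1 + d) (Cmod (zcoord q)).
Proof. intros. unfold stretch. field. lra. Qed.

Lemma stretch_annulus d s q : 0 < Cmod (zcoord q) ->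
  1 - d <= Cmod (zcoord q) <= 1 + d -> stretch d s q = 1.
Proof. intros Hz Hd. unfold stretch. rewrite clip_id by exact Hd. field. lra. Qed.

Lemma stretch_0 d q : 0 < Cmod (zcoord q) -> stretch d 0 q = 1.
Proof. intros. unfold stretch. field. lra. Qed.

Lemma stretch_pos d s q : 0 <= d < 1 -> 0 <= s <= 1 -> 0 < Cmod (zcoord q) ->
  0 < stretch d s q.
Proof.
  intros Hd Hs Hz. pose proof (clip_bounds (1 - d) (1 + d) (Cmod (zcoord q)) ltac:(lra)).
  unfold stretch. apply Rdiv_lt_0_compat; [|exact Hz].
  destruct (Req_dec s 0); [subst; lra | nra].
Qed.

Lemma stretch_same_side d s q : 0 < d -> 0 <= s <= 1 -> 0 < Cmod (zcoord q) ->
  stretch d s q = 1 \/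
  0 < (stretch d s q * Cmod (zcoord q) - 1) * (Cmod (zcoord q) - 1).
Proof.
  intros Hd Hs Hz. set (n := Cmod (zcoord q)) in *.
  destruct (Rle_dec (1 - d) n), (Rle_dec n (1 + d)).
  - left. now apply stretch_annulus.
  - right. rewrite stretch_mul by exact Hz. fold n.
    replace (clip (1 - d) (1 + d) n) with (1 + d)
      by (unfold clip, Rmax, Rmin; repeat destruct Rle_dec; lra).
    assert (0 <= (1 - s) * (n - 1 - d)) by (apply Rmult_le_pos; lra). nra.
  - right. rewrite stretch_mul by exact Hz. fold n.
    replace (clip (1 - d) (1 + d) n) with (1 - d)
      by (unfold clip, Rmax, Rmin; repeat destruct Rle_dec; lra).
    assert (0 <= (1 - s) * (1 - d - n)) by (apply Rmult_le_pos; lra). nra.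
  - lra.
Qed.

Lemma Re_ratio_stretch_pos a d s q : Cmod a = 1 -> 0 < d < 1 -> 0 <= s <= 1 -> OnN q ->
  0 < Re (ratio a (stretch d s q) (zcoord q)).
Proof.
  intros Ha Hd Hs HN. pose proof (Cmod_zcoord_pos q HN) as Hz.
  destruct (stretch_same_side d s q) as [E|Hside]; try lra.
  - rewrite E, ratio_1. simpl. lra.
  - apply Re_ratio_pos; auto. apply stretch_pos; auto; lra.
Qed.

Lemma deform_id k d s q : stretch d s q = 1 -> deform k d s q = q.
Proof.
  intros E. unfold deform. rewrite E, !ratio_1, csqrt_1, sqrt_1, Rinv_1.
  rewrite <- (pt_of_coords q) at 4. f_equal; ring.
Qed.

Lemma Cmod_zcoord_deform_1 k d q : 0 < d < 1 -> OnN q ->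
  1 - d <= Cmod (zcoord (deform k d 1 q)) <= 1 + d.
Proof.
  intros Hd HN. pose proof (Cmod_zcoord_pos q HN) as Hz.
  unfold deform. rewrite zcoord_pt_of, Cmod_mult, Cmod_R, Rabs_right
    by (apply Rle_ge, Rlt_le, stretch_pos; lra).
  rewrite stretch_mul, Rminus_diag, Rmult_0_l, Rplus_0_l, Rmult_1_l by exact Hz.
  apply clip_bounds. lra.
Qed.

Lemma Gamma_deform k d s q : -1 <= k < 1 -> 0 < d < 1 -> 0 <= s <= 1 ->
  Gamma k q -> Gamma k (deform k d s q).
Proof.
  intros Hk Hd Hs HG.
  destruct (Req_dec (stretch d s q) 1) as [E|E]; [now rewrite deform_id|].
  apply (Gamma_iff_branch_eq k q Hk) in HG as [HN HM].
  apply (Gamma_iff_branch_eq k _ Hk).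
  pose proof (Cmod_zcoord_pos q HN) as Hz.
  pose proof (stretch_pos d s q ltac:(lra) Hs Hz) as Hr.
  destruct (stretch_same_side d s q ltac:(lra) Hs Hz) as [|Hside]; [contradiction|].
  pose proof (zw_one q HN) as Hzw.
  pose proof (Cmod_branch k ltac:(nra)) as Ha.
  pose proof Ha as Hb. rewrite <- (Cmod_conj (branch k)) in Hb.
  set (a := branch k) in *. set (b := Cconj a) in *. set (r := stretch d s q) in *.
  set (z := zcoord q) in *. set (w := wcoord q) in *.
  assert (Hne : forall c, Cmod c = 1 -> z <> c).
  { intros c Hc Ezc. rewrite Ezc, Hc in Hside. lra. }
  assert (Hsq : forall c, Cmod c = 1 ->
            (csqrt (ratio c r z) * csqrt (ratio c r z))%C = ratio c r z).
  { intros c Hc. apply csqrt_sqr. pose proof (Cmod_ge_0 (ratio c r z)).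
    pose proof (Re_ratio_pos c r z Hc Hr Hside). lra. }
  assert (HT : (RtoC (/ sqrt r) * RtoC (/ sqrt r))%C = RtoC (/ r)).
  { rewrite <- RtoC_mult, <- Rinv_mult, sqrt_sqrt by lra. reflexivity. }
  assert (Hrr : (RtoC r * RtoC (/ r))%C = 1%C).
  { rewrite <- RtoC_mult, Rinv_r by lra. reflexivity. }
  unfold deform. fold a b r z w.
  rewrite OnN_pt_of, zcoord_pt_of, wcoord_pt_of. cbn [M2 pt_of fst]. split.
  - transitivity ((RtoC r * RtoC (/ r)) * (z * w))%C; [ring | rewrite Hrr, Hzw; ring].
  - transitivity (M2 q * M2 q * (csqrt (ratio a r z) * csqrt (ratio a r z))
                  * (csqrt (ratio b r z) * csqrt (ratio b r z))
                  * (RtoC (/ sqrt r) * RtoC (/ sqrt r)))%C; [ring|].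
    rewrite HM, !Hsq, HT by assumption.
    rewrite <- (ratio_mul a r z (Hne a Ha)), <- (ratio_mul b r z (Hne b Hb)). ring.
Qed.

Section DeformContinuity.
Context {X : UniformSpace}.

Lemma continuous_pt_of (M z w : X -> C) x :
  continuous M x -> continuous z x -> continuous w x ->
  continuous (fun y => pt_of (M y) (z y) (w y)) x.
Proof.
  intros HM Hz Hw. apply continuous_pt_iff; unfold pt_of, M2, N1, N3; cbn [fst snd].
  repeat split; [exact HM | ..]; apply continuous_Cmult; try apply continuous_const;
    [apply continuous_Cplus | apply continuous_Cminus]; assumption.
Qed.

Lemma continuous_zcoord (p : X -> pt) x :
  continuous p x -> continuous (fun y => zcoord (p y)) x.
Proof.
  intros [_ [H1 H3]]%continuous_pt_iff. unfold zcoord.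
  apply continuous_Cplus; [|apply continuous_Cmult; [apply continuous_const|]]; assumption.
Qed.

Lemma continuous_wcoord (p : X -> pt) x :
  continuous p x -> continuous (fun y => wcoord (p y)) x.
Proof.
  intros [_ [H1 H3]]%continuous_pt_iff. unfold wcoord.
  apply continuous_Cminus; [|apply continuous_Cmult; [apply continuous_const|]]; assumption.
Qed.

Lemma continuous_stretch d (sg : X -> R) (p : X -> pt) x :
  continuous sg x -> continuous p x -> OnN (p x) ->
  continuous (fun y => stretch d (sg y) (p y)) x.
Proof.
  intros Hsg Hp HN. pose proof (continuous_Cmod _ x (continuous_zcoord p x Hp)) as Hn.
  unfold stretch. apply continuous_Rdiv; [| exact Hn | apply Rgt_not_eq, Cmod_zcoord_pos, HN].
  apply continuous_Rplus; apply continuous_Rmult; auto.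
  - apply continuous_Rminus; [apply continuous_const | exact Hsg].
  - apply (continuous_comp _ (clip _ _)); [exact Hn | apply continuous_clip].
Qed.

Lemma continuous_ratio a (r : X -> R) (z : X -> C) x :
  continuous r x -> continuous z x -> z x <> a ->
  continuous (fun y => ratio a (r y) (z y)) x.
Proof.
  intros Hr Hz Ha. unfold ratio, Cdiv.
  apply continuous_Cplus; [apply continuous_const|].
  apply continuous_Cmult; [apply continuous_Cmult; [|exact Hz]|].
  - apply continuous_RtoC, continuous_Rminus; [exact Hr | apply continuous_const].
  - apply continuous_Cinv; [apply continuous_Cminus; [exact Hz | apply continuous_const]|].
    intros E. now apply Ha, Ceq_minus.
Qed.

Lemma continuous_deform k d (sg : X -> R) (p : X -> pt) x :
  -1 <= k < 1 -> 0 < d < 1 -> continuous sg x -> continuous p x ->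
  0 <= sg x <= 1 -> OnN (p x) -> continuous (fun y => deform k d (sg y) (p y)) x.
Proof.
  intros Hk Hd Hsg Hp Hs HN.
  pose proof (continuous_zcoord p x Hp) as Hz.
  pose proof (continuous_Cmod _ x Hz) as Hn.
  (* Inside the open annulus deform is locally the identity; outside it, z stays off
     the unit circle and hence away from the branch points. *)
  destruct (Rlt_dec (Rabs (Cmod (zcoord (p x)) - 1)) d) as [Hin|Hout].
  - apply Rabs_def2 in Hin.
    apply (continuous_ext_loc _ p); [|exact Hp].
    apply (filter_imp (fun y => 1 - d < Cmod (zcoord (p y)) < 1 + d));
      [|apply locally_between; [exact Hn | lra]].
    intros y Hy. symmetry. apply deform_id, stretch_annulus; lra.
  - pose proof (continuous_stretch d sg p x Hsg Hp HN) as Hr.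
    pose proof (stretch_pos d (sg x) (p x) ltac:(lra) Hs (Cmod_zcoord_pos _ HN)) as Hr0.
    assert (Hsqrt : forall c, Cmod c = 1 ->
      continuous (fun y => csqrt (ratio c (stretch d (sg y) (p y)) (zcoord (p y)))) x).
    { intros c Hc. apply continuous_csqrt.
      - apply continuous_ratio; [exact Hr | exact Hz |].
        intros E. rewrite E, Hc, Rminus_diag, Rabs_R0 in Hout. lra.
      - pose proof (Cmod_ge_0 (ratio c (stretch d (sg x) (p x)) (zcoord (p x)))).
        pose proof (Re_ratio_stretch_pos c d (sg x) (p x) Hc Hd Hs HN). lra. }
    pose proof (Cmod_branch k ltac:(nra)) as Ha.
    unfold deform. apply continuous_pt_of.
    + apply continuous_Cmult; [apply continuous_Cmult; [apply continuous_Cmult|]|].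
      * now apply continuous_pt_iff.
      * now apply Hsqrt.
      * apply Hsqrt. now rewrite Cmod_conj.
      * apply continuous_RtoC, continuous_Rinv_fun; [now apply continuous_sqrt_fun|].
        apply Rgt_not_eq, sqrt_lt_R0, Hr0.
    + apply continuous_Cmult; [apply continuous_RtoC|]; assumption.
    + apply continuous_Cmult; [|now apply continuous_wcoord].
      apply continuous_RtoC, continuous_Rinv_fun; [exact Hr | lra].
Qed.

End DeformContinuity.

Definition dist1 (p q : pt) : R :=
  Cmod (M2 p - M2 q) + Cmod (N1 p - N1 q) + Cmod (N3 p - N3 q).

Lemma dist3_le_dist1 p q : dist3 p q <= dist1 p q.
Proof.
  unfold dist3, dist1.
  pose proof (Cmod_ge_0 (M2 p - M2 q)). pose proof (Cmod_ge_0 (N1 p - N1 q)).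
  pose proof (Cmod_ge_0 (N3 p - N3 q)).
  rewrite <- sqrt_pow2 by lra. apply sqrt_le_1_alt. nra.
Qed.

Lemma Cmod_sub_triangle (x y z : C) : Cmod (x - z) <= Cmod (x - y) + Cmod (y - z).
Proof. replace (x - z)%C with ((x - y) + (y - z))%C by ring. apply Cmod_triangle. Qed.

Lemma dist1_triangle p q r : dist1 p r <= dist1 p q + dist1 q r.
Proof.
  unfold dist1.
  pose proof (Cmod_sub_triangle (M2 p) (M2 q) (M2 r)).
  pose proof (Cmod_sub_triangle (N1 p) (N1 q) (N1 r)).
  pose proof (Cmod_sub_triangle (N3 p) (N3 q) (N3 r)). lra.
Qed.

Lemma dist1_pt_of M z w M' z' w' :
  dist1 (pt_of M z w) (pt_of M' z' w') <= Cmod (M - M') + Cmod (z - z') + Cmod (w - w').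
Proof.
  unfold dist1, pt_of, M2, N1, N3; cbn [fst snd].
  replace (RtoC (1/2) * (z + w) - RtoC (1/2) * (z' + w'))%C
    with (RtoC (1/2) * ((z - z') + (w - w')))%C by ring.
  replace (RtoC (1/2) * - Ci * (z - w) - RtoC (1/2) * - Ci * (z' - w'))%C
    with (RtoC (1/2) * - Ci * ((z - z') + - (w - w')))%C by ring.
  rewrite !Cmod_mult, Cmod_opp, Cmod_Ci, Cmod_R, Rabs_right by lra.
  pose proof (Cmod_triangle (z - z') (w - w')).
  pose proof (Cmod_triangle (z - z') (- (w - w'))). rewrite Cmod_opp in *. lra.
Qed.

Lemma dist1_continuous (f : R -> pt) x0 : continuous f x0 ->
  forall eps, 0 < eps ->
  exists eta, 0 < eta /\ forall x, Rabs (x - x0) < eta -> dist1 (f x0) (f x) < eps.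
Proof.
  intros Hf eps Heps.
  apply continuous_pt_iff in Hf as [H1 [H2 H3]].
  assert (Hd : continuous (fun x => dist1 (f x0) (f x)) x0).
  { unfold dist1.
    repeat apply continuous_Rplus; apply continuous_Cmod, continuous_Cminus;
      try apply continuous_const; assumption. }
  assert (Hd0 : dist1 (f x0) (f x0) = 0).
  { unfold dist1. replace (M2 (f x0) - M2 (f x0))%C with (RtoC 0) by ring.
    replace (N1 (f x0) - N1 (f x0))%C with (RtoC 0) by ring.
    replace (N3 (f x0) - N3 (f x0))%C with (RtoC 0) by ring. rewrite Cmod_0. ring. }
  destruct (locally_between _ x0 (-1) eps Hd ltac:(lra)) as [eta Heta].
  exists eta. split; [apply cond_pos|]. intros x Hx. now apply Heta.
Qed.

Lemma uniform_radius (f : R -> pt) (P : pt -> Prop) a b :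
  (forall x, continuous f x) ->
  (forall x, a <= x <= b -> exists r, 0 < r /\ forall q, dist1 (f x) q < r -> P q) ->
  exists r, 0 < r /\ forall x, a <= x <= b -> forall q, dist1 (f x) q < r -> P q.
Proof.
  intros Hc Hr.
  assert (Hloc : forall t, exists delta, 0 < delta /\ (a <= t <= b ->
            forall x, Rabs (x - t) < delta -> forall q, dist1 (f x) q < delta -> P q)).
  { intros t. destruct (Rle_dec a t) as [Hat|Hat], (Rle_dec t b) as [Htb|Htb];
      [| exists 1; split; [lra | intros; lra] ..].
    destruct (Hr t) as [r [Hr0 HP]]; [lra|].
    destruct (dist1_continuous f t (Hc t) (r / 2)) as [eta [Heta Hcont]]; [lra|].
    exists (Rmin eta (r / 2)). split; [apply Rmin_glb_lt; lra|].
    intros _ x Hx q Hq. apply HP.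
    pose proof (Rmin_l eta (r / 2)). pose proof (Rmin_r eta (r / 2)).
    pose proof (Hcont x ltac:(lra)). pose proof (dist1_triangle (f t) (f x) q). lra. }
  (* A Lebesgue number of the cover of [a, b] by the intervals (t - delta t, t + delta t). *)
  destruct (functional_choice _ Hloc) as [delta Hdelta].
  destruct (compactness_value_1d a b (fun t => mkposreal _ (proj1 (Hdelta t)))) as [r Hcov].
  exists r. split; [apply cond_pos|]. intros x Hx q Hq.
  apply NNPP. intros HnP. apply (Hcov x Hx). intros [t [Ht [Hxt Hrt]]]. simpl in *.
  apply HnP, (proj2 (Hdelta t) Ht x Hxt). lra.
Qed.

Lemma sign_cases s : s * s = 1 -> s = 1 \/ s = -1.
Proof. intros H. assert ((s - 1) * (s + 1) = 0) as [E|E]%Rmult_integral by nra; lra. Qed.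

Lemma uniform_radius_signs (P : R -> R -> Prop) :
  (forall s r r', 0 < r' <= r -> P s r -> P s r') ->
  (forall s, s * s = 1 -> exists r, 0 < r /\ P s r) ->
  exists r, 0 < r /\ forall s, s * s = 1 -> P s r.
Proof.
  intros Hmono Hr.
  destruct (Hr 1) as [r1 [Hr1 P1]]; [ring|]. destruct (Hr (-1)) as [r2 [Hr2 P2]]; [ring|].
  assert (Hpos : 0 < Rmin r1 r2) by now apply Rmin_glb_lt.
  exists (Rmin r1 r2). split; [exact Hpos|].
  pose proof (Rmin_l r1 r2). pose proof (Rmin_r r1 r2).
  intros s [->| ->]%sign_cases; [apply (Hmono 1 r1) | apply (Hmono (-1) r2)]; auto; lra.
Qed.

(* For s1, s2 = +-1 and -1 <= x < 1 these are the real points of Gamma_1; x = 1 gives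
   the equilibrium u_eq. *)
Definition homoclinic (s1 s2 x : R) : pt :=
  (RtoC (s1 * sqrt (2 - 2 * x)), RtoC x, RtoC (s2 * sqrt (1 - x * x))).

Lemma continuous_homoclinic s1 s2 x : continuous (homoclinic s1 s2) x.
Proof.
  apply continuous_pt_iff; unfold homoclinic, M2, N1, N3; cbn [fst snd].
  repeat split; apply continuous_RtoC; try apply continuous_id;
    apply continuous_Rmult; try apply continuous_const; apply continuous_sqrt_fun;
    apply continuous_Rminus; try apply continuous_const;
    apply continuous_Rmult; apply continuous_id || apply continuous_const.
Qed.

Lemma homoclinic_Gamma1 s1 s2 x : s1 * s1 = 1 -> s2 * s2 = 1 -> -1 <= x < 1 ->
  Gamma 1 (homoclinic s1 s2 x) /\ is_real_pt (homoclinic s1 s2 x).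
Proof.
  intros H1 H2 Hx.
  pose proof (sqrt_sqrt (2 - 2 * x) ltac:(lra)).
  pose proof (sqrt_sqrt (1 - x * x) ltac:(nra)).
  unfold Gamma, OnN, is_real_pt, homoclinic, u_eq, M2, N1, N3; cbn [fst snd].
  repeat split; try reflexivity.
  - apply injective_projections; simpl; nra.
  - apply injective_projections; simpl; nra.
  - intros _ E. injection E. lra.
Qed.

Lemma homoclinic_Omega s1 s2 x : s1 * s1 = 1 -> s2 * s2 = 1 -> -1 <= x <= 1 ->
  Omega (homoclinic s1 s2 x).
Proof.
  intros H1 H2 Hx r Hr.
  destruct (dist1_continuous _ x (continuous_homoclinic s1 s2 x) r Hr) as [eta [Heta Hc]].
  set (x' := Rmax (-1) (x - eta / 2)).
  assert (Hx' : -1 <= x' < 1 /\ Rabs (x' - x) < eta).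
  { unfold x', Rmax. destruct Rle_dec; repeat split; try apply Rabs_def1; lra. }
  exists (homoclinic s1 s2 x'). destruct (homoclinic_Gamma1 s1 s2 x') as [HG HR]; try tauto.
  split; [exact HG | split; [exact HR |]].
  pose proof (dist3_le_dist1 (homoclinic s1 s2 x) (homoclinic s1 s2 x')).
  pose proof (Hc x' (proj2 Hx')). lra.
Qed.

Lemma Omega_uniform_radius U : nbhd_of_Omega_in_N U ->
  exists r, 0 < r /\ forall s1 s2 x q, s1 * s1 = 1 -> s2 * s2 = 1 -> -1 <= x <= 1 ->
    OnN q -> dist1 (homoclinic s1 s2 x) q < r -> U q.
Proof.
  intros [_ HU].
  assert (Hcurve : forall s1 s2, s1 * s1 = 1 -> s2 * s2 = 1 -> exists r, 0 < r /\
    forall x, -1 <= x <= 1 -> forall q, dist1 (homoclinic s1 s2 x) q < r -> OnN q -> U q).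
  { intros s1 s2 H1 H2. apply uniform_radius; [apply continuous_homoclinic|].
    intros x Hx. destruct (HU _ (homoclinic_Omega s1 s2 x H1 H2 Hx)) as [r [Hr HUr]].
    exists r. split; [exact Hr|]. intros q Hq HN. apply HUr; [exact HN|].
    pose proof (dist3_le_dist1 (homoclinic s1 s2 x) q). lra. }
  destruct (uniform_radius_signs (fun s1 r => forall s2, s2 * s2 = 1 ->
    forall x, -1 <= x <= 1 -> forall q, dist1 (homoclinic s1 s2 x) q < r -> OnN q -> U q))
    as [r [Hr HUr]].
  - intros s1 r r' Hr' HP s2 Hs2 x Hx q Hq. apply (HP s2 Hs2 x Hx q). lra.
  - intros s1 Hs1.
    apply (uniform_radius_signs (fun s2 r =>
      forall x, -1 <= x <= 1 -> forall q, dist1 (homoclinic s1 s2 x) q < r -> OnN q -> U q)).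
    + intros s2 r r' Hr' HP x Hx q Hq. apply (HP x Hx q). lra.
    + intros s2 Hs2. now apply Hcurve.
  - exists r. split; [exact Hr|]. intros s1 s2 x q Hs1 Hs2 Hx HN Hq.
    exact (HUr s1 Hs1 s2 Hs2 x Hx q Hq HN).
Qed.

Lemma Cmod_sub_comm (x y : C) : Cmod (x - y) = Cmod (y - x).
Proof. rewrite <- Cmod_opp. f_equal. ring. Qed.

Lemma sqrt_sign_choice (M : C) (m : R) :
  exists s, s * s = 1 /\ Cmod (RtoC (s * m) - M) <= sqrt (Cmod (M * M - RtoC (m * m))).
Proof.
  set (D := Cmod (M * M - RtoC (m * m))).
  assert (Hprod : Cmod (M - RtoC m) * Cmod (M + RtoC m) = D).
  { unfold D. rewrite <- Cmod_mult, RtoC_mult. f_equal. ring. }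
  pose proof (sqrt_sqrt D (Cmod_ge_0 _)). pose proof (sqrt_pos D).
  pose proof (Cmod_ge_0 (M - RtoC m)). pose proof (Cmod_ge_0 (M + RtoC m)).
  destruct (Rle_dec (Cmod (M - RtoC m)) (sqrt D)).
  - exists 1. split; [ring|]. now rewrite Rmult_1_l, Cmod_sub_comm.
  - exists (-1). split; [ring|].
    replace (RtoC (-1 * m) - M)%C with (- (M + RtoC m))%C
      by (rewrite RtoC_mult; ring).
    rewrite Cmod_opp. nra.
Qed.

Lemma unit_circle_sign x t : x * x + t * t = 1 ->
  exists s, s * s = 1 /\ s * sqrt (1 - x * x) = t.
Proof.
  intros H. replace (1 - x * x) with (t * t) by lra.
  destruct (Rle_dec 0 t).
  - exists 1. rewrite sqrt_square by lra. split; ring.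
  - exists (-1). replace (t * t) with (- t * - t) by ring.
    rewrite sqrt_square by lra. split; ring.
Qed.

Lemma near_unit_circle (z w : C) (d : R) : (z * w)%C = 1%C -> 0 < d <= 1/2 ->
  1 - d <= Cmod z <= 1 + d ->
  exists e, Cmod e = 1 /\ Cmod (z - e) <= d /\ Cmod (w - Cconj e) <= 2 * d.
Proof.
  intros Hzw Hd Hann. set (n := Cmod z) in *.
  assert (Hn : 1/2 <= n) by lra.
  assert (Hinv : 0 < / n <= 2).
  { split; [apply Rinv_0_lt_compat; lra|].
    rewrite <- (Rinv_inv 2). apply Rinv_le_contravar; lra. }
  set (e := (RtoC (/ n) * z)%C). exists e.
  assert (He : Cmod e = 1).
  { unfold e. rewrite Cmod_mult, Cmod_R, Rabs_right by lra. fold n. field. lra. }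
  assert (Hee : (e * Cconj e)%C = 1%C)
    by (rewrite <- Cmod2_conj, He; apply injective_projections; simpl; ring).
  assert (Hze : Cmod (z - e) <= d).
  { replace (z - e)%C with (RtoC (1 - / n) * z)%C by (unfold e; rewrite RtoC_minus; ring).
    rewrite Cmod_mult, Cmod_R. fold n.
    replace (Rabs (1 - / n) * n) with (Rabs ((1 - / n) * n))
      by (rewrite Rabs_mult, (Rabs_right n) by lra; reflexivity).
    replace ((1 - / n) * n) with (n - 1) by (field; lra).
    apply Rabs_le. lra. }
  assert (Hw : Cmod w = / n).
  { assert (E : n * Cmod w = 1) by (unfold n; rewrite <- Cmod_mult, Hzw; apply Cmod_1).
    apply (Rmult_eq_reg_l n); [rewrite E; field | ]; lra. }
  split; [exact He | split; [exact Hze |]].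
  replace (w - Cconj e)%C with (- (w * Cconj e) * (z - e))%C.
  - rewrite !Cmod_mult, Cmod_opp, Cmod_mult, Cmod_conj, He, Hw.
    pose proof (Cmod_ge_0 (z - e)). nra.
  - transitivity (- Cconj e * (z * w) + w * (e * Cconj e))%C; [ring | rewrite Hzw, Hee; ring].
Qed.

Lemma homoclinic_pt_of s1 s2 (e : C) : s2 * sqrt (1 - Re e * Re e) = Im e ->
  homoclinic s1 s2 (Re e) = pt_of (RtoC (s1 * sqrt (2 - 2 * Re e))) e (Cconj e).
Proof.
  intros Ht. unfold homoclinic, pt_of. rewrite Ht.
  destruct e as [x t]; unfold Re, Im; simpl.
  f_equal; [f_equal|]; apply injective_projections; simpl; field.
Qed.

Lemma near_homoclinic (c d : R) (q : pt) : 0 < d <= 1/2 -> OnN q ->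
  (RtoC (1/2) * (M2 q * M2 q) + N1 q)%C = RtoC c ->
  1 - d <= Cmod (zcoord q) <= 1 + d ->
  exists s1 s2 x, s1 * s1 = 1 /\ s2 * s2 = 1 /\ -1 <= x <= 1 /\
    dist1 (homoclinic s1 s2 x) q <= sqrt (2 * Rabs (c - 1) + 3 * d) + 3 * d.
Proof.
  intros Hd HN Hcurve Hann.
  destruct (near_unit_circle _ _ d (zw_one q HN) Hd Hann) as [e [He [Hze Hwe]]].
  set (z := zcoord q) in *. set (w := wcoord q) in *. set (x := Re e).
  assert (Hxt : x * x + Im e * Im e = 1) by (unfold x; rewrite <- Cmod_sqr, He; ring).
  destruct (unit_circle_sign x (Im e) Hxt) as [s2 [Hs2 Ht]].
  assert (Hx : -1 <= x <= 1) by nra.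
  set (m := sqrt (2 - 2 * x)).
  assert (Hm : m * m = 2 - 2 * x) by (apply sqrt_sqrt; lra).
  assert (HMm : Cmod (M2 q * M2 q - RtoC (m * m)) <= 2 * Rabs (c - 1) + 3 * d).
  { replace (M2 q * M2 q - RtoC (m * m))%C
      with (RtoC (2 * (c - 1)) - ((z - e) + (w - Cconj e)))%C.
    - pose proof (Cmod_triangle (RtoC (2 * (c - 1))) (- ((z - e) + (w - Cconj e)))) as T1.
      pose proof (Cmod_triangle (z - e) (w - Cconj e)).
      rewrite Cmod_opp, Cmod_R, Rabs_mult, (Rabs_right 2) in T1 by lra.
      unfold Cminus in *. lra.
    - transitivity (RtoC (2 * (c - 1)) - (z + w) + (e + Cconj e))%C; [ring|].
      rewrite Hm. unfold x, z, w, zcoord, wcoord.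
      injection Hcurve. destruct e, (M2 q), (N1 q), (N3 q).
      intros; apply injective_projections; simpl in *; nra. }
  destruct (sqrt_sign_choice (M2 q) m) as [s1 [Hs1 HM]].
  exists s1, s2, x. split; [exact Hs1 | split; [exact Hs2 | split; [exact Hx|]]].
  unfold x. rewrite (homoclinic_pt_of s1 s2 e Ht), <- (pt_of_coords q). fold x m z w.
  eapply Rle_trans; [apply dist1_pt_of|].
  rewrite (Cmod_sub_comm e), (Cmod_sub_comm (Cconj e)).
  pose proof (sqrt_le_1_alt _ _ HMm). lra.
Qed.

Lemma Gamma_annulus_in_nbhd U : nbhd_of_Omega_in_N U ->
  exists d, 0 < d <= 1/2 /\ forall k q, 0 < k < 1 -> 1 - k < d -> Gamma k q ->
    1 - d <= Cmod (zcoord q) <= 1 + d -> U q.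
Proof.
  intros HU. destruct (Omega_uniform_radius U HU) as [r [Hr HUr]].
  (* With d = r0^2/64 and 1 - k < d, near_homoclinic gives a distance below
     sqrt (11 d) + 3 d < r0. *)
  set (r0 := Rmin 1 r).
  assert (Hr0 : 0 < r0 <= 1 /\ r0 <= r)
    by (unfold r0; split; [split; [apply Rmin_glb_lt; lra | apply Rmin_l] | apply Rmin_r]).
  exists (r0 * r0 / 64). split; [nra|].
  intros k q Hk Hkd [HG [HN _]] Hann.
  destruct (near_homoclinic (2 * k ^ 2 - 1) (r0 * r0 / 64) q ltac:(nra) HN HG Hann)
    as [s1 [s2 [x [Hs1 [Hs2 [Hx Hdist]]]]]].
  apply (HUr s1 s2 x q Hs1 Hs2 Hx HN).
  assert (Hc : Rabs (2 * k ^ 2 - 1 - 1) < 4 * (r0 * r0 / 64))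
    by (rewrite Rabs_left; simpl; nra).
  assert (Hsqrt : sqrt (2 * Rabs (2 * k ^ 2 - 1 - 1) + 3 * (r0 * r0 / 64)) < r0 / 2).
  { rewrite <- (sqrt_pow2 (r0 / 2)) by lra. apply sqrt_lt_1_alt.
    pose proof (Rabs_pos (2 * k ^ 2 - 1 - 1)). nra. }
  nra.
Qed.

Section LoopDeformation.
Variables (S : pt -> Prop) (p : pt) (F : R -> pt -> pt).
Hypothesis F_continuous : forall s q, 0 <= s <= 1 -> S q ->
  continuous (fun sq : R * pt => F (fst sq) (snd sq)) (s, q).
Hypothesis F_maps : forall s q, 0 <= s <= 1 -> S q -> S (F s q).
Hypothesis F_start : forall q, S q -> F 0 q = q.
Hypothesis F_fixes_base : forall s, 0 <= s <= 1 -> F s p = p.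

(* F is only controlled on S, and loops only on [0, 1]: loops are clipped to [0, 1]. *)
Let cl := clip 0 1.

Lemma cl_bounds t : 0 <= cl t <= 1.
Proof. apply clip_bounds. lra. Qed.

Lemma continuous_F_path {X : UniformSpace} (g : R -> pt) (sg tau : X -> R) x :
  path_in S g -> continuous sg x -> 0 <= sg x <= 1 -> continuous tau x ->
  continuous (fun y => F (sg y) (g (cl (tau y)))) x.
Proof.
  intros [Hg HgS] Hsg Hs Htau.
  apply (continuous_comp (fun y => (sg y, g (cl (tau y)))) (fun sq => F (fst sq) (snd sq))).
  - apply continuous_pair_iff. split; [exact Hsg|].
    apply (continuous_comp (fun y => cl (tau y))); [|apply Hg].
    apply (continuous_comp tau); [exact Htau | apply continuous_clip].
  - apply F_continuous; [exact Hs | apply HgS, cl_bounds].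
Qed.

Lemma loop_in_deformed g : loop_in S p g -> loop_in S p (fun t => F 1 (g (cl t))).
Proof.
  intros [Hpath [Hg0 Hg1]]. split; [split|split].
  - intros t. apply continuous_F_path; auto; [apply continuous_const | lra | apply continuous_id].
  - intros t _. apply F_maps; [lra | apply Hpath, cl_bounds].
  - unfold cl. rewrite clip_id, Hg0 by lra. apply F_fixes_base. lra.
  - unfold cl. rewrite clip_id, Hg1 by lra. apply F_fixes_base. lra.
Qed.

Lemma loop_homotopic_deformed g : loop_in S p g ->
  loop_homotopic S p g (word_loop p ((true, fun t => F 1 (g (cl t))) :: nil)).
Proof.
  intros [Hpath [Hg0 Hg1]].
  (* H (s, t) = F s (g (min 1 (t (1 + s)))): at s = 1 the loop F 1 o g is run on
     [0, 1/2] and then rests at p, as in the one-letter word. *)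
  exists (fun st => F (cl (fst st)) (g (cl (cl (snd st) * (1 + cl (fst st)))))).
  split; [|split; [|split]].
  - intros [s t]. apply continuous_F_path; auto; try apply cl_bounds.
    + apply (continuous_comp fst); [apply continuous_fst | apply continuous_clip].
    + apply continuous_Rmult.
      * apply (continuous_comp snd); [apply continuous_snd | apply continuous_clip].
      * apply continuous_Rplus; [apply continuous_const|].
        apply (continuous_comp fst); [apply continuous_fst | apply continuous_clip].
  - intros s t _ _. apply F_maps; [apply cl_bounds | apply Hpath, cl_bounds].
  - intros t Ht. unfold cl in *; simpl.
    rewrite (clip_id 0 1 0), (clip_id 0 1 1), (clip_id 0 1 t) by lra. split.
    + rewrite Rplus_0_r, Rmult_1_r, clip_id by lra. apply F_start, Hpath, Ht.
    + unfold word_loop, loop_concat, const_loop; simpl.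
      destruct (Rle_dec t (1 / 2)).
      * replace (t * (1 + 1)) with (2 * t) by ring. reflexivity.
      * replace (clip 0 1 (t * (1 + 1))) with 1
          by (unfold clip, Rmax, Rmin; repeat destruct Rle_dec; lra).
        rewrite Hg1. apply F_fixes_base. lra.
  - intros s Hs. pose proof (cl_bounds s). unfold cl in *; simpl.
    rewrite (clip_id 0 1 0), (clip_id 0 1 1) by lra. split.
    + rewrite Rmult_0_l, (clip_id 0 1 0), Hg0 by lra. now apply F_fixes_base.
    + rewrite Rmult_1_l.
      replace (clip 0 1 (1 + clip 0 1 s)) with 1
        by (unfold clip, Rmax, Rmin; repeat destruct Rle_dec; lra).
      rewrite Hg1. now apply F_fixes_base.
Qed.

Lemma pi1_generated_by_deformation (U : pt -> Prop) :
  (forall q, S q -> U (F 1 q)) -> pi1_generated_by_loops_in S U p.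
Proof.
  intros HU g Hg. exists ((true, fun t => F 1 (g (cl t))) :: nil). split.
  - intros bg [<-|[]]. simpl.
    destruct (loop_in_deformed g Hg) as [[Hc HS] Hends]. split; [split|exact Hends].
    + exact Hc.
    + intros t Ht. split; [now apply HS | apply HU, (proj2 (proj1 Hg)), cl_bounds].
  - now apply loop_homotopic_deformed.
Qed.
End LoopDeformation.

Theorem lemma5 :
  forall U : pt -> Prop, nbhd_of_Omega_in_N U ->
  exists eps, 0 < eps /\
    forall k, 0 < k -> 0 < 1 - k < eps ->
      exists p, Gamma k p /\ U p /\ pi1_generated_by_loops_in (Gamma k) U p.
Proof.
  intros U HU. destruct (Gamma_annulus_in_nbhd U HU) as [d [Hd Hann]].
  exists d. split; [lra|]. intros k Hk0 Hk.
  assert (Hk1 : -1 <= k < 1) by lra.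
  (* The base point has z = -1 on the unit circle, so every deform k d s fixes it. *)
  set (p := (RtoC (2 * k), RtoC (-1), RtoC 0) : pt).
  assert (Gp : Gamma k p).
  { unfold Gamma, OnN, p, M2, N1, N3; cbn [fst snd].
    repeat split; [apply injective_projections; simpl; field .. | lra]. }
  assert (Hzp : Cmod (zcoord p) = 1).
  { unfold zcoord, p, N1, N3; cbn [fst snd]. rewrite <- Cmod_m1. f_equal.
    apply injective_projections; simpl; ring. }
  exists p. split; [exact Gp | split; [apply (Hann k); auto; lra |]].
  apply (pi1_generated_by_deformation (Gamma k) p (deform k d)).
  - intros s q Hs [_ [HN _]].
    apply (continuous_deform k d fst snd (s, q)); auto; try lra;
      [apply continuous_fst | apply continuous_snd].
  - intros s q Hs. now apply Gamma_deform; [| lra |].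
  - intros q [_ [HN _]]. now apply deform_id, stretch_0, Cmod_zcoord_pos.
  - intros s _. apply deform_id, stretch_annulus; lra.
  - intros q Hq. apply (Hann k); [lra | lra | apply Gamma_deform; auto; lra |].
    apply Cmod_zcoord_deform_1; [lra | apply Hq].
Qed.
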